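(* If $U$ is one of the operators $V_1,W_1,V_2,W_2$, then (a) the eigenvalues of $U$ are $i$ and $-i$, and (b) for each $n\in\mathbb N$ the space $Y_{4n}$ is invariant under $U$. If $U$ is one of the operators $V_{1r},W_{1r},V_{1b},W_{1b},V_{2r},W_{2r},V_{2b},W_{2b}$, then (a$'$) the eigenvalues of $U$ are $\{\pm i\sqrt j\}_{j=0}^\infty$; (b$'$) $\mathrm{span}\{x: Ux=\lambda x,\ |\lambda|<\sqrt n\}\subset Y_{4n}$ for every $n\in\mathbb N$; (c$'$) $\mathrm{span}\{x: Ux=\lambda x,\ |\lambda|>\sqrt n\}\subset Y_{4n}^\perp$ for every $n\in\mathbb N$.
   Context: Let $X=(L^2(\mathbb R))^4$ with orthonormal basis $\{\phi_j\}_{j\ge1}$ given, for $q=0,1,2,\dots$, by $\phi_{4q+1}=(|q\rangle,0,0,0)$, $\phi_{4q+2}=(0,|q\rangle,0,0)$, $\phi_{4q+3}=(0,0,|q\rangle,0)$, $\phi_{4q+4}=(0,0,0,|q\rangle)$, where $|q\rangle$ is the $q$-th Hermite function. For distinct indices $j,k$ define operators $E_{j,k},F_{j,k}$ on $X$ by $E_{j,k}\phi_j=i\phi_k$, $E_{j,k}\phi_k=i\phi_j$, $F_{j,k}\phi_j=-\phi_k$, $F_{j,k}\phi_k=\phi_j$, and $E_{j,k}\phi_l=F_{j,k}\phi_l=0$ for $l\notin\{j,k\}$. With all sums over $q\ge0$, define $V_1=-\sum(E_{4q+1,4q+2}+E_{4q+3,4q+4})$, $W_1=\sum(F_{4q+1,4q+2}+F_{4q+3,4q+4})$,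 $V_{1r}=-\sum\sqrt{q+1}(E_{4q+2,4q+5}+E_{4q+4,4q+7})$, $W_{1r}=\sum\sqrt{q+1}(F_{4q+2,4q+5}+F_{4q+4,4q+7})$, $V_{1b}=-\sum\sqrt{q+1}(E_{4q+1,4q+6}+E_{4q+3,4q+8})$, $W_{1b}=-\sum\sqrt{q+1}(F_{4q+1,4q+6}+F_{4q+3,4q+8})$, $V_2=-\sum(E_{4q+1,4q+3}+E_{4q+2,4q+4})$, $W_2=\sum(F_{4q+1,4q+3}+F_{4q+2,4q+4})$, $V_{2r}=-\sum\sqrt{q+1}(E_{4q+1,4q+7}+E_{4q+2,4q+8})$, $W_{2r}=\sum\sqrt{q+1}(F_{4q+1,4q+7}+F_{4q+2,4q+8})$, $V_{2b}=-\sum\sqrt{q+1}(E_{4q+3,4q+5}+E_{4q+4,4q+6})$, $W_{2b}=-\sum\sqrt{q+1}(F_{4q+3,4q+5}+F_{4q+4,4q+6})$. $Y_k=\mathrm{span}\{\phi_1,\dots,\phi_k\}$. *)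

From Stdlib Require Import Reals List.
From Coquelicot Require Import Coquelicot.
Open Scope C_scope.

(* X = (L^2(R))^4 is modelled through its orthonormal basis (phi_j)_{j>=1}:
   a vector is its coefficient sequence; coordinate l (0-based) is the
   coefficient of phi_(l+1).  X = l^2. *)
Definition vec := nat -> C.

Definition l2 (x : vec) : Prop := ex_series (fun j => (Cmod (x j) ^ 2)%R).

Definition phi (j : nat) : vec := fun l => if Nat.eqb (S l) j then 1 else 0.

Definition in_span (P : vec -> Prop) (x : vec) : Prop :=
  exists L : list (prod C vec),
    List.Forall (fun p => P (snd p)) L /\
    forall l, x l = fold_right (fun p acc => fst p * snd p l + acc) 0 L.

Definition Y (k : nat) : vec -> Prop :=
  in_span (fun v => exists j, (1 <= j <= k)%nat /\ v = phi j).

Definition inner_is (x y : vec) (z : C) : Prop :=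
  is_series (fun j => x j * Cconj (y j)) z.

Definition Yperp (k : nat) (x : vec) : Prop :=
  l2 x /\ forall y, Y k y -> inner_is x y 0.

Definition Eop (j k : nat) (x : vec) : vec := fun l =>
  if Nat.eqb (S l) k then Ci * x (j - 1)%nat
  else if Nat.eqb (S l) j then Ci * x (k - 1)%nat else 0.
Definition Fop (j k : nat) (x : vec) : vec := fun l =>
  if Nat.eqb (S l) k then - x (j - 1)%nat
  else if Nat.eqb (S l) j then x (k - 1)%nat else 0.

Fixpoint csum (f : nat -> C) (n : nat) : C :=
  match n with O => 0 | S m => csum f m + f m end.

(* In every family below, the term of
   index q only involves basis indices >= 4q+1, so at coordinate l only
   terms with q <= l can be nonzero: the coordinatewise series is the
   finite sum over q < l+1. *)
Definition opsum (T : nat -> vec -> vec) (x : vec) : vec :=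
  fun l => csum (fun q => T q x l) (S l).

Definition sq1 (q : nat) : C := RtoC (sqrt (INR (S q))).

Definition V1 : vec -> vec := fun x l => - opsum (fun q x =>
  fun l => Eop (4*q+1) (4*q+2) x l + Eop (4*q+3) (4*q+4) x l) x l.
Definition W1 : vec -> vec := fun x l => opsum (fun q x =>
  fun l => Fop (4*q+1) (4*q+2) x l + Fop (4*q+3) (4*q+4) x l) x l.
Definition V1r : vec -> vec := fun x l => - opsum (fun q x =>
  fun l => sq1 q * (Eop (4*q+2) (4*q+5) x l + Eop (4*q+4) (4*q+7) x l)) x l.
Definition W1r : vec -> vec := fun x l => opsum (fun q x =>
  fun l => sq1 q * (Fop (4*q+2) (4*q+5) x l + Fop (4*q+4) (4*q+7) x l)) x l.
Definition V1b : vec -> vec := fun x l => - opsum (fun q x =>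
  fun l => sq1 q * (Eop (4*q+1) (4*q+6) x l + Eop (4*q+3) (4*q+8) x l)) x l.
Definition W1b : vec -> vec := fun x l => - opsum (fun q x =>
  fun l => sq1 q * (Fop (4*q+1) (4*q+6) x l + Fop (4*q+3) (4*q+8) x l)) x l.
Definition V2 : vec -> vec := fun x l => - opsum (fun q x =>
  fun l => Eop (4*q+1) (4*q+3) x l + Eop (4*q+2) (4*q+4) x l) x l.
Definition W2 : vec -> vec := fun x l => opsum (fun q x =>
  fun l => Fop (4*q+1) (4*q+3) x l + Fop (4*q+2) (4*q+4) x l) x l.
Definition V2r : vec -> vec := fun x l => - opsum (fun q x =>
  fun l => sq1 q * (Eop (4*q+1) (4*q+7) x l + Eop (4*q+2) (4*q+8) x l)) x l.
Definition W2r : vec -> vec := fun x l => opsum (fun q x =>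
  fun l => sq1 q * (Fop (4*q+1) (4*q+7) x l + Fop (4*q+2) (4*q+8) x l)) x l.
Definition V2b : vec -> vec := fun x l => - opsum (fun q x =>
  fun l => sq1 q * (Eop (4*q+3) (4*q+5) x l + Eop (4*q+4) (4*q+6) x l)) x l.
Definition W2b : vec -> vec := fun x l => - opsum (fun q x =>
  fun l => sq1 q * (Fop (4*q+3) (4*q+5) x l + Fop (4*q+4) (4*q+6) x l)) x l.

Definition dom (U : vec -> vec) (x : vec) : Prop := l2 x /\ l2 (U x).

Definition eigpair (U : vec -> vec) (lam : C) (x : vec) : Prop :=
  dom U x /\ forall l, U x l = lam * x l.

Definition eigenvalue (U : vec -> vec) (lam : C) : Prop :=
  exists x, eigpair U lam x /\ x <> (fun _ => 0).

From Stdlib Require Import Reals List Lia Lra Classical FunctionalExtensionality.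
From Coquelicot Require Import Coquelicot.
Open Scope C_scope.

(* In the basis (phi_j), each of the twelve operators acts coordinatewise as
   (U x)_l = s_l sqrt(k_l) x_(p l), where the involution p exchanges the two basis
   vectors of each E_{j,k} or F_{j,k} term, k_l = k_(p l), and s_l s_(p l) = -1 on
   genuine pairs.  Applying this twice on an eigenvector gives lam^2 x_l = -k_l x_l,
   so lam = +-i sqrt(k_l) on the support of x, and each pair {l, p l} carries
   eigenvectors for both signs.  For V1, W1, V2, W2 every weight is 1 and p stays
   inside blocks of four coordinates; for the other eight operators k_l is the Hermite
   level l/4 of the coordinate or the next one, which turns bounds on |lam| into
   bounds on the support of the eigenvectors. *)

Definition finsupp (x : vec) (N : nat) : Prop := forall l, (N <= l)%nat -> x l = 0.

Lemma sum_n_eventually_const {G : AbelianMonoid} (a : nat -> G) N :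
  (forall n, (N < n)%nat -> a n = zero) ->
  forall n, (N <= n)%nat -> sum_n a n = sum_n a N.
Proof.
  intros Ha n Hn; induction Hn as [|n Hn IH]; [reflexivity|].
  rewrite sum_Sn, IH, Ha by lia. apply plus_zero_r.
Qed.

Lemma is_series_eventually_zero {K : AbsRing} {V : NormedModule K} (a : nat -> V) N :
  (forall n, (N < n)%nat -> a n = zero) -> is_series a (sum_n a N).
Proof.
  intros Ha. apply filterlim_ext_loc with (fun _ => sum_n a N).
  - exists N. intros n Hn. symmetry. now apply sum_n_eventually_const.
  - apply filterlim_const.
Qed.

Lemma l2_finsupp x N : finsupp x N -> l2 x.
Proof.
  intros Hx. exists (sum_n (fun j => (Cmod (x j) ^ 2)%R) N).
  apply (@is_series_eventually_zero R_AbsRing R_NormedModule).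
  intros n Hn. rewrite Hx, Cmod_0 by lia. unfold zero; simpl. ring.
Qed.

Lemma in_span_vanish (P : vec -> Prop) (Q : nat -> Prop) x :
  (forall v, P v -> forall l, Q l -> v l = 0) -> in_span P x -> forall l, Q l -> x l = 0.
Proof.
  intros HP (L & HL & Hx) l Hl. rewrite Hx. clear Hx.
  induction HL as [|[c v] L Hv HL IH]; cbn; [reflexivity|].
  rewrite IH, (HP v Hv l Hl). ring.
Qed.

Lemma in_span_finsupp (P : vec -> Prop) x :
  (forall v, P v -> exists N, finsupp v N) -> in_span P x -> exists N, finsupp x N.
Proof.
  intros HP (L & HL & Hx).
  enough (exists N, forall l, (N <= l)%nat ->
            fold_right (fun p acc => fst p * snd p l + acc) 0 L = 0) as [N HN]
    by (exists N; intros l Hl; rewrite Hx; auto).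
  clear Hx. induction HL as [|[c v] L Hv HL IH]; [exists 0%nat; reflexivity|].
  destruct IH as [N1 H1], (HP v Hv) as [N2 H2]. exists (N1 + N2)%nat.
  intros l Hl. cbn. rewrite H1, H2 by lia. ring.
Qed.

Lemma coords_on_phi_seq (x : vec) s K l :
  fold_right (fun p acc => fst p * snd p l + acc) 0 (map (fun i => (x i, phi (S i))) (seq s K))
  = if andb (s <=? l)%nat (l <? s + K)%nat then x l else 0.
Proof.
  revert s. induction K as [|K IH]; intros s; simpl.
  - destruct (Nat.leb_spec s l), (Nat.ltb_spec l (s + 0)); try lia; reflexivity.
  - rewrite IH. unfold phi.
    destruct (Nat.leb_spec s l), (Nat.ltb_spec l (s + S K)), (Nat.leb_spec (S s) l),
      (Nat.ltb_spec l (S s + K)), (Nat.eqb_spec (S l) (S s)); simpl; try lia; try ring.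
    replace s with l by lia. ring.
Qed.

Lemma Y_finsupp x K : finsupp x K -> Y K x.
Proof.
  intros Hx. exists (map (fun i => (x i, phi (S i))) (seq 0 K)). split.
  - apply Forall_forall. intros q Hq. apply in_map_iff in Hq as (i & <- & Hi).
    apply in_seq in Hi. exists (S i). split; [lia | reflexivity].
  - intros l. rewrite coords_on_phi_seq.
    destruct (Nat.ltb_spec l (0 + K)); [reflexivity|]. apply Hx. lia.
Qed.

Lemma finsupp_Y x K : Y K x -> finsupp x K.
Proof.
  intros HY l Hl. refine (in_span_vanish _ (fun l => (K <= l)%nat) x _ HY l Hl).
  intros v (j & Hj & ->) m Hm. unfold phi. destruct (Nat.eqb_spec (S m) j); [lia | reflexivity].
Qed.

Lemma Yperp_finsupp x N K :
  finsupp x N -> (forall l, (l < K)%nat -> x l = 0) -> Yperp K x.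
Proof.
  intros HN Hlow. split; [exact (l2_finsupp x N HN)|].
  intros y Hy. apply finsupp_Y in Hy.
  assert (Hxy : forall j, x j * Cconj (y j) = 0).
  { intros j. destruct (Nat.lt_ge_cases j K).
    - rewrite Hlow by assumption. ring.
    - rewrite Hy by assumption. apply injective_projections; cbn; ring. }
  unfold inner_is.
  replace (RtoC 0) with (sum_n (fun j => x j * Cconj (y j)) 0) by (rewrite sum_O; apply Hxy).
  apply (@is_series_eventually_zero C_AbsRing C_NormedModule). intros n _. apply Hxy.
Qed.

Lemma sqrt_INR_0 : sqrt (INR 0) = 0%R.
Proof. apply sqrt_0. Qed.

Lemma RtoC_neq (a b : R) : a <> b -> RtoC a <> RtoC b.
Proof. intros Hab E. apply Hab. exact (f_equal fst E). Qed.

Lemma Csqr_eq_neg_sqr (lam : C) (w : R) : (0 <= w)%R ->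
  lam * lam = - (RtoC w * RtoC w) -> lam = Ci * RtoC w \/ lam = - (Ci * RtoC w).
Proof.
  destruct lam as [a b]. intros Hw H.
  pose proof (f_equal fst H) as H1. pose proof (f_equal snd H) as H2. cbn in H1, H2.
  assert (Hab : (a * b = 0)%R) by lra.
  assert (Ha : a = 0%R).
  { assert (Hq : (a * a * (a * a + w * w) = 0)%R).
    { replace (a * a + w * w)%R with (b * b)%R by lra.
      replace (a * a * (b * b))%R with ((a * b) * (a * b))%R by ring. rewrite Hab. ring. }
    apply Rmult_integral in Hq as [Hq | Hq]; nra. }
  subst a.
  assert (Hb : ((b - w) * (b + w) = 0)%R) by nra.
  apply Rmult_integral in Hb as [Hb | Hb]; [left | right];
    apply injective_projections; cbn; lra.
Qed.

Lemma Cmod_Ci_scale (w : R) (lam : C) : (0 <= w)%R ->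
  lam = Ci * RtoC w \/ lam = - (Ci * RtoC w) -> Cmod lam = w.
Proof.
  intros Hw [-> | ->]; rewrite ?Cmod_opp, Cmod_mult, Cmod_Ci, Cmod_R, Rabs_pos_eq; lra.
Qed.

Record weighted_involution (U : vec -> vec) (p : nat -> nat) (s : nat -> C)
    (k : nat -> nat) : Prop := {
  wi_apply : forall x l, U x l = s l * RtoC (sqrt (INR (k l))) * x (p l);
  wi_involutive : forall l, p (p l) = l;
  wi_sign : forall l, k l <> 0%nat -> s l * s (p l) = -1;
  wi_weight_sym : forall l, k (p l) = k l;
  wi_fixpoint : forall l, p l = l -> k l = 0%nat
}.

Section WeightedInvolution.

Variables (U : vec -> vec) (p : nat -> nat) (s : nat -> C) (k : nat -> nat).
Hypothesis HU : weighted_involution U p s k.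

Let w l : C := RtoC (sqrt (INR (k l))).

Lemma eigvec_coord_eigenvalue lam x l :
  (forall m, U x m = lam * x m) -> x l <> 0 ->
  lam = Ci * w l \/ lam = - (Ci * w l).
Proof.
  intros Hx Hxl. apply Csqr_eq_neg_sqr; [apply sqrt_pos|].
  assert (E1 : s l * w l * x (p l) = lam * x l) by (rewrite <- Hx, (wi_apply _ _ _ _ HU); reflexivity).
  assert (E2 : s (p l) * w l * x l = lam * x (p l)).
  { rewrite <- Hx, (wi_apply _ _ _ _ HU), (wi_involutive _ _ _ _ HU).
    unfold w. rewrite (wi_weight_sym _ _ _ _ HU). reflexivity. }
  assert (Hsq : lam * lam * x l = (s l * s (p l)) * (w l * w l) * x l).
  { transitivity (lam * (lam * x l)); [ring|]. rewrite <- E1.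
    transitivity (s l * w l * (lam * x (p l))); [ring|]. rewrite <- E2. ring. }
  assert (Hk : (s l * s (p l)) * (w l * w l) = - (w l * w l)).
  { unfold w. destruct (Nat.eq_dec (k l) 0) as [-> | Hk].
    - rewrite sqrt_INR_0. ring.
    - rewrite (wi_sign _ _ _ _ HU) by exact Hk. ring. }
  rewrite Hk in Hsq.
  transitivity (lam * lam * x l / x l); [field; exact Hxl|].
  rewrite Hsq. unfold w. field. exact Hxl.
Qed.

Lemma eigpair_Cmod lam x l : eigpair U lam x -> x l <> 0 -> Cmod lam = sqrt (INR (k l)).
Proof.
  intros [_ Hx] Hxl. apply Cmod_Ci_scale; [apply sqrt_pos|].
  exact (eigvec_coord_eigenvalue lam x l Hx Hxl).
Qed.

Lemma eigpair_level lam x l m :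
  eigpair U lam x -> x l <> 0 -> x m <> 0 -> k m = k l.
Proof.
  intros Hx Hl Hm. apply INR_eq, sqrt_inj; try apply pos_INR.
  now rewrite <- (eigpair_Cmod lam x l), <- (eigpair_Cmod lam x m).
Qed.

Lemma eigenvalue_finsupp lam x l N :
  finsupp x N -> x l <> 0 -> (forall m, U x m = lam * x m) -> eigenvalue U lam.
Proof.
  intros HN Hl Hx. exists x. split; [split; [split|] | ].
  - exact (l2_finsupp x N HN).
  - apply (l2_finsupp _ N). intros m Hm. rewrite Hx, HN by exact Hm. ring.
  - exact Hx.
  - intros E. apply Hl. exact (f_equal (fun f => f l) E).
Qed.

Lemma eigenvalue_null_coord l : k l = 0%nat -> eigenvalue U 0.
Proof.
  intros Hk. set (x := fun m => if m =? l then (1 : C) else 0).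
  apply (eigenvalue_finsupp 0 x l (S l)).
  - intros m Hm. unfold x. destruct (Nat.eqb_spec m l); [lia | reflexivity].
  - unfold x. rewrite Nat.eqb_refl. apply RtoC_neq. lra.
  - intros m. rewrite (wi_apply _ _ _ _ HU). unfold x.
    destruct (Nat.eqb_spec (p m) l) as [E | _]; [|ring].
    rewrite <- E, (wi_weight_sym _ _ _ _ HU) in Hk. rewrite Hk, sqrt_INR_0. ring.
Qed.

Lemma eigenvalue_pair_coord l lam : k l <> 0%nat ->
  lam * lam = - (w l * w l) -> eigenvalue U lam.
Proof.
  intros Hk Hlam.
  assert (Hpl : p l <> l) by (intros E; apply Hk, (wi_fixpoint _ _ _ _ HU), E).
  assert (Hw : w l <> 0).
  { apply RtoC_neq. assert (0 < sqrt (INR (k l)))%R by (apply sqrt_lt_R0, lt_0_INR; lia). lra. }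
  assert (Hsign : s l * s (p l) = -1) by exact (wi_sign _ _ _ _ HU l Hk).
  assert (Hs : s l <> 0).
  { intros E. rewrite E in Hsign. apply (RtoC_neq 0 (-1)); [lra|].
    rewrite <- Hsign. apply injective_projections; cbn; ring. }
  (* [mu] is forced by the equation at [l]; the one at [p l] then holds because
     [lam^2 = - k l = s l * s (p l) * k l]. *)
  set (mu := lam / (s l * w l)).
  set (x := fun m => if m =? l then (1 : C) else if m =? p l then mu else 0).
  apply (eigenvalue_finsupp lam x l (S (l + p l))).
  - intros m Hm. unfold x. destruct (Nat.eqb_spec m l), (Nat.eqb_spec m (p l)); try lia; reflexivity.
  - unfold x. rewrite Nat.eqb_refl. apply RtoC_neq. lra.
  - intros m. rewrite (wi_apply _ _ _ _ HU). unfold x. fold (w m).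
    destruct (Nat.eqb_spec m l) as [-> | Hml].
    { destruct (Nat.eqb_spec (p l) l); [contradiction|]. rewrite Nat.eqb_refl.
      unfold mu. field. auto. }
    destruct (Nat.eqb_spec m (p l)) as [-> | Hmpl].
    { rewrite (wi_involutive _ _ _ _ HU), Nat.eqb_refl. unfold w.
      rewrite (wi_weight_sym _ _ _ _ HU). fold (w l). unfold mu.
      replace (lam * (lam / (s l * w l))) with (lam * lam / (s l * w l)) by (field; auto).
      rewrite Hlam. replace (- (w l * w l)) with (s l * s (p l) * (w l * w l)) by (rewrite Hsign; ring).
      field. auto. }
    destruct (Nat.eqb_spec (p m) l) as [E | _].
    { exfalso. apply Hmpl. rewrite <- E, (wi_involutive _ _ _ _ HU). reflexivity. }
    destruct (Nat.eqb_spec (p m) (p l)) as [E | _]; [|ring].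
    exfalso. apply Hml. rewrite <- (wi_involutive _ _ _ _ HU m), E, (wi_involutive _ _ _ _ HU). reflexivity.
Qed.

Lemma eigenvalue_weighted_involution lam :
  eigenvalue U lam <-> exists l, lam = Ci * w l \/ lam = - (Ci * w l).
Proof.
  split.
  - intros (x & [_ Hx] & Hnz). apply NNPP. intros Hno. apply Hnz.
    apply functional_extensionality. intros l. apply NNPP. intros Hl.
    exact (Hno (ex_intro _ l (eigvec_coord_eigenvalue lam x l Hx Hl))).
  - intros (l & Hl). destruct (Nat.eq_dec (k l) 0) as [Hk | Hk].
    + replace lam with (RtoC 0); [exact (eigenvalue_null_coord l Hk)|].
      unfold w in Hl. rewrite Hk, sqrt_INR_0 in Hl.
      destruct Hl as [-> | ->]; apply injective_projections; cbn; ring.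
    + apply (eigenvalue_pair_coord l); [exact Hk|].
      destruct Hl as [-> | ->]; apply injective_projections; cbn; ring.
Qed.

End WeightedInvolution.

Lemma div4_bounds l : (4 * (l / 4) <= l < 4 * (l / 4) + 4)%nat.
Proof. pose proof (Nat.div_mod l 4) as E. pose proof (Nat.mod_upper_bound l 4). lia. Qed.

Lemma Y_invariant_block_preserving U p s k n x :
  weighted_involution U p s k -> (forall l, p l / 4 = l / 4)%nat ->
  Y (4 * n) x -> Y (4 * n) (U x).
Proof.
  intros HU Hp Hx. apply finsupp_Y in Hx. apply Y_finsupp. intros l Hl.
  rewrite (wi_apply _ _ _ _ HU), Hx; [ring|].
  specialize (Hp l). pose proof (div4_bounds l). pose proof (div4_bounds (p l)). lia.
Qed.

Lemma eigenvalue_unit_weight U p s lam :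
  weighted_involution U p s (fun _ => 1%nat) -> eigenvalue U lam <-> lam = Ci \/ lam = - Ci.
Proof.
  intros HU. rewrite (eigenvalue_weighted_involution _ _ _ _ HU).
  assert (Hi : Ci * RtoC (sqrt (INR 1)) = Ci)
    by (cbn [INR]; rewrite sqrt_1; apply injective_projections; cbn; ring).
  rewrite Hi. split; [intros [_ H]; exact H | intros H; exists 0%nat; exact H].
Qed.

Section HermiteLevelWeights.

Variables (U : vec -> vec) (p : nat -> nat) (s : nat -> C) (k : nat -> nat).
Hypothesis HU : weighted_involution U p s k.
Hypothesis Hlevel : forall l, (l / 4 <= k l <= S (l / 4))%nat.

Lemma eigenvalue_hermite_level lam : (forall j, exists l, k l = j) ->
  eigenvalue U lam <->
  exists j, lam = Ci * RtoC (sqrt (INR j)) \/ lam = - (Ci * RtoC (sqrt (INR j))).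
Proof.
  intros Hsurj. rewrite (eigenvalue_weighted_involution _ _ _ _ HU). split.
  - intros [l Hl]. exists (k l). exact Hl.
  - intros [j Hj]. destruct (Hsurj j) as [l <-]. exists l. exact Hj.
Qed.

Lemma eigpair_small_support lam v n m :
  eigpair U lam v -> (Cmod lam < sqrt (INR n))%R -> (4 * n <= m)%nat -> v m = 0.
Proof.
  intros Hv Hlam Hm. apply NNPP. intros Hvm.
  rewrite (eigpair_Cmod _ _ _ _ HU lam v m Hv Hvm) in Hlam.
  apply sqrt_lt_0_alt, INR_lt in Hlam. specialize (Hlevel m). pose proof (div4_bounds m). lia.
Qed.

Lemma eigpair_large_support lam v n m :
  eigpair U lam v -> (Cmod lam > sqrt (INR n))%R -> (m < 4 * n)%nat -> v m = 0.
Proof.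
  intros Hv Hlam Hm. apply NNPP. intros Hvm.
  rewrite (eigpair_Cmod _ _ _ _ HU lam v m Hv Hvm) in Hlam.
  apply sqrt_lt_0_alt, INR_lt in Hlam. specialize (Hlevel m). pose proof (div4_bounds m). lia.
Qed.

Lemma eigpair_finsupp lam v : eigpair U lam v -> exists N, finsupp v N.
Proof.
  intros Hv. destruct (classic (exists l, v l <> 0)) as [[l Hl] | Hzero].
  - exists (4 * k l + 4)%nat. intros m Hm. apply NNPP. intros Hvm.
    pose proof (eigpair_level _ _ _ _ HU lam v l m Hv Hl Hvm) as Hk.
    specialize (Hlevel m). pose proof (div4_bounds m). lia.
  - exists 0%nat. intros m _. apply NNPP. intros Hvm. apply Hzero. exists m. exact Hvm.
Qed.

Lemma span_small_eigvecs_Y n x :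
  in_span (fun v => exists lam, (Cmod lam < sqrt (INR n))%R /\ eigpair U lam v) x ->
  Y (4 * n) x.
Proof.
  intros Hx. apply Y_finsupp. intros l Hl.
  refine (in_span_vanish _ (fun l => (4 * n <= l)%nat) x _ Hx l Hl).
  intros v (lam & Hlam & Hv) m Hm. exact (eigpair_small_support lam v n m Hv Hlam Hm).
Qed.

Lemma span_large_eigvecs_Yperp n x :
  in_span (fun v => exists lam, (Cmod lam > sqrt (INR n))%R /\ eigpair U lam v) x ->
  Yperp (4 * n) x.
Proof.
  intros Hx. assert (Hfin : exists N, finsupp x N).
  { refine (in_span_finsupp _ x _ Hx). intros v (lam & _ & Hv). exact (eigpair_finsupp lam v Hv). }
  destruct Hfin as [N HN].
  apply (Yperp_finsupp x N _ HN).
  refine (in_span_vanish _ (fun l => (l < 4 * n)%nat) x _ Hx).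
  intros v (lam & Hlam & Hv) m Hm. exact (eigpair_large_support lam v n m Hv Hlam Hm).
Qed.

End HermiteLevelWeights.

Lemma unit_weight_spectral_properties U p s :
  weighted_involution U p s (fun _ => 1%nat) -> (forall l, p l / 4 = l / 4)%nat ->
  (forall lam : C, eigenvalue U lam <-> (lam = Ci \/ lam = - Ci)) /\
  (forall n : nat, (1 <= n)%nat -> forall x, Y (4 * n) x -> Y (4 * n) (U x)).
Proof.
  intros HU Hp. split.
  - intros lam. exact (eigenvalue_unit_weight U p s lam HU).
  - intros n _ x. exact (Y_invariant_block_preserving U p s _ n x HU Hp).
Qed.

Lemma hermite_level_spectral_properties U p s k :
  weighted_involution U p s k -> (forall l, l / 4 <= k l <= S (l / 4))%nat ->
  (forall j, exists l, k l = j) ->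
  (forall lam : C, eigenvalue U lam <->
     exists j : nat, lam = Ci * RtoC (sqrt (INR j)) \/ lam = - (Ci * RtoC (sqrt (INR j)))) /\
  (forall n : nat, (1 <= n)%nat ->
     forall x, in_span (fun v => exists lam, (Cmod lam < sqrt (INR n))%R /\ eigpair U lam v) x ->
     Y (4 * n) x) /\
  (forall n : nat, (1 <= n)%nat ->
     forall x, in_span (fun v => exists lam, (Cmod lam > sqrt (INR n))%R /\ eigpair U lam v) x ->
     Yperp (4 * n) x).
Proof.
  intros HU Hk Hsurj. split; [|split].
  - intros lam. exact (eigenvalue_hermite_level U p s k HU lam Hsurj).
  - intros n _. exact (span_small_eigvecs_Y U p s k HU Hk n).
  - intros n _. exact (span_large_eigvecs_Yperp U p s k HU Hk n).
Qed.

Lemma csum_zero (f : nat -> C) n : (forall q, (q < n)%nat -> f q = 0) -> csum f n = 0.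
Proof.
  induction n as [|n IH]; intros Hf; cbn; [reflexivity|].
  rewrite IH, Hf; [ring | lia | intros q Hq; apply Hf; lia].
Qed.

Lemma csum_single (f : nat -> C) n m : (m < n)%nat ->
  (forall q, (q < n)%nat -> q <> m -> f q = 0) -> csum f n = f m.
Proof.
  induction n as [|n IH]; intros Hm Hf; [lia|]. cbn.
  destruct (Nat.eq_dec m n) as [-> | Hmn].
  - rewrite csum_zero by (intros q Hq; apply Hf; lia). ring.
  - rewrite IH, (Hf n); [ring | lia | lia | lia | intros q Hq Hqm; apply Hf; lia].
Qed.

Lemma residue4_decomp l : exists q r, (r < 4)%nat /\ l = (4 * q + r)%nat.
Proof.
  exists (l / 4)%nat, (l mod 4)%nat.
  split; [apply Nat.mod_upper_bound; lia | apply Nat.div_mod; lia].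
Qed.

Lemma mod4 q r : (r < 4)%nat -> ((4 * q + r) mod 4 = r)%nat.
Proof. intros. symmetry. apply Nat.mod_unique with q; lia. Qed.

Lemma div4 q r : (r < 4)%nat -> ((4 * q + r) / 4 = q)%nat.
Proof. intros. symmetry. apply Nat.div_unique with r; lia. Qed.

Lemma mod4_0 q : ((4 * q) mod 4 = 0)%nat.
Proof. rewrite <- (Nat.add_0_r (4 * q)). apply mod4. lia. Qed.

Lemma div4_0 q : ((4 * q) / 4 = q)%nat.
Proof. rewrite <- (Nat.add_0_r (4 * q)). apply div4. lia. Qed.

(* Coordinate [4 q + r] ([r < 4]) is the coefficient of [|q>] in component [r + 1]
   of [X]; a map on coordinates is given by its four restrictions to the residues. *)
Definition by_residue {A : Type} (f0 f1 f2 f3 : nat -> A) (l : nat) : A :=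
  match (l mod 4)%nat with
  | 0%nat => f0 (l / 4)%nat | 1%nat => f1 (l / 4)%nat | 2%nat => f2 (l / 4)%nat
  | _ => f3 (l / 4)%nat
  end.

Definition signs (a0 a1 a2 a3 : C) : nat -> C :=
  by_residue (fun _ => a0) (fun _ => a1) (fun _ => a2) (fun _ => a3).

Definition pV1 : nat -> nat :=
  (by_residue (fun q => 4 * q + 1) (fun q => 4 * q) (fun q => 4 * q + 3) (fun q => 4 * q + 2))%nat.
Definition pV2 : nat -> nat :=
  (by_residue (fun q => 4 * q + 2) (fun q => 4 * q + 3) (fun q => 4 * q) (fun q => 4 * q + 1))%nat.

(* The [q =? 0] branches are the basis vectors touched by no term of the series:
   they are fixed by the involution and get weight 0. *)
Definition pV1r : nat -> nat :=
  (by_residue (fun q => if q =? 0 then 0 else 4 * (q - 1) + 1)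
              (fun q => 4 * (q + 1))
              (fun q => if q =? 0 then 2 else 4 * (q - 1) + 3)
              (fun q => 4 * (q + 1) + 2))%nat.
Definition pV1b : nat -> nat :=
  (by_residue (fun q => 4 * (q + 1) + 1)
              (fun q => if q =? 0 then 1 else 4 * (q - 1))
              (fun q => 4 * (q + 1) + 3)
              (fun q => if q =? 0 then 3 else 4 * (q - 1) + 2))%nat.
Definition pV2r : nat -> nat :=
  (by_residue (fun q => 4 * (q + 1) + 2)
              (fun q => 4 * (q + 1) + 3)
              (fun q => if q =? 0 then 2 else 4 * (q - 1))
              (fun q => if q =? 0 then 3 else 4 * (q - 1) + 1))%nat.
Definition pV2b : nat -> nat :=
  (by_residue (fun q => if q =? 0 then 0 else 4 * (q - 1) + 2)
              (fun q => if q =? 0 then 1 else 4 * (q - 1) + 3)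
              (fun q => 4 * (q + 1))
              (fun q => 4 * (q + 1) + 1))%nat.

Definition kV1r : nat -> nat := (by_residue (fun q => q) S (fun q => q) S)%nat.
Definition kV1b : nat -> nat := (by_residue S (fun q => q) S (fun q => q))%nat.
Definition kV2r : nat -> nat := (by_residue S S (fun q => q) (fun q => q))%nat.
Definition kV2b : nat -> nat := (by_residue (fun q => q) (fun q => q) S S)%nat.

Ltac case_nat_eqb := match goal with |- context [Nat.eqb ?a ?b] => destruct (Nat.eqb_spec a b) end.

Ltac residue_cases l :=
  let q := fresh "q" in let r := fresh "r" in
  destruct (residue4_decomp l) as (q & r & ? & ->);
  unfold pV1, pV2, pV1r, pV1b, pV2r, pV2b, kV1r, kV1b, kV2r, kV2b, signs, by_residue in *;
  destruct r as [|[|[|[|r]]]]; try lia; destruct q as [|q];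
  repeat (first [rewrite mod4 in * by lia | rewrite div4 in * by lia
                | rewrite mod4_0 in * | rewrite div4_0 in *
                | progress (cbv iota beta in *) | progress (cbn [Nat.eqb Nat.add] in *)
                | progress (cbn [Nat.modulo Nat.div Nat.divmod fst snd Nat.sub] in *)]).

(* Makes indices that are equal as naturals syntactically equal, so that [ring] applies. *)
Ltac unify_indices x :=
  repeat match goal with |- context [x ?a] => match goal with |- context [x ?b] =>
    assert_fails (constr_eq a b); replace a with b by lia end end;
  repeat match goal with |- context [INR ?a] => match goal with |- context [INR ?b] =>
    assert_fails (constr_eq a b); replace a with b by lia end end.

Ltac pair_term_zero :=
  intros ?q ?Hq; try intros ?Hne; cbv beta; unfold Eop, Fop, sq1;
  repeat case_nat_eqb; try (exfalso; lia); ring.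

Ltac pair_term_value x :=
  cbv beta; cbn [Nat.eqb]; unfold Eop, Fop, sq1; repeat case_nat_eqb; try (exfalso; lia);
  unify_indices x; cbn [INR]; rewrite ?sqrt_1; ring.

Ltac csum_at x q0 :=
  match goal with |- context [csum ?f ?n] => rewrite (csum_single f n q0) end;
  [pair_term_value x | lia | pair_term_zero].

Ltac csum_none :=
  match goal with |- context [csum ?f ?n] => rewrite (csum_zero f n) end;
  [cbn [Nat.eqb]; rewrite ?sqrt_INR_0; ring | pair_term_zero].

(* At coordinate [4 q + r] only the term of index [q], or [q - 1] for a pair reaching
   into the next Hermite level, of the defining series is nonzero. *)
Ltac opsum_coord :=
  let x := fresh "x" in let l := fresh "l" in let q := fresh "q" in let r := fresh "r" in
  intros x l; destruct (residue4_decomp l) as (q & r & ? & ->);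
  unfold opsum, pV1, pV2, pV1r, pV1b, pV2r, pV2b, kV1r, kV1b, kV2r, kV2b, signs, by_residue;
  cbv beta; rewrite ?mod4, ?div4, ?mod4_0, ?div4_0 by lia; destruct r as [|[|[|[|r]]]]; try lia;
  first [ csum_at x q | csum_none | destruct q as [|q]; [csum_none | csum_at x q] ].

Ltac weighted_involution_tac :=
  split; [opsum_coord | intros l; residue_cases l; lia
         | intros l Hl; residue_cases l; try lia; apply injective_projections; cbn; ring
         | intros l; residue_cases l; lia | intros l Hl; residue_cases l; lia].

Lemma wi_V1 : weighted_involution V1 pV1 (fun _ => - Ci) (fun _ => 1%nat).
Proof. unfold V1. weighted_involution_tac. Qed.
Lemma wi_W1 : weighted_involution W1 pV1 (signs 1 (-1) 1 (-1)) (fun _ => 1%nat).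
Proof. unfold W1. weighted_involution_tac. Qed.
Lemma wi_V2 : weighted_involution V2 pV2 (fun _ => - Ci) (fun _ => 1%nat).
Proof. unfold V2. weighted_involution_tac. Qed.
Lemma wi_W2 : weighted_involution W2 pV2 (signs 1 1 (-1) (-1)) (fun _ => 1%nat).
Proof. unfold W2. weighted_involution_tac. Qed.
Lemma wi_V1r : weighted_involution V1r pV1r (fun _ => - Ci) kV1r.
Proof. unfold V1r. weighted_involution_tac. Qed.
Lemma wi_W1r : weighted_involution W1r pV1r (signs (-1) 1 (-1) 1) kV1r.
Proof. unfold W1r. weighted_involution_tac. Qed.
Lemma wi_V1b : weighted_involution V1b pV1b (fun _ => - Ci) kV1b.
Proof. unfold V1b. weighted_involution_tac. Qed.
Lemma wi_W1b : weighted_involution W1b pV1b (signs (-1) 1 (-1) 1) kV1b.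
Proof. unfold W1b. weighted_involution_tac. Qed.
Lemma wi_V2r : weighted_involution V2r pV2r (fun _ => - Ci) kV2r.
Proof. unfold V2r. weighted_involution_tac. Qed.
Lemma wi_W2r : weighted_involution W2r pV2r (signs 1 1 (-1) (-1)) kV2r.
Proof. unfold W2r. weighted_involution_tac. Qed.
Lemma wi_V2b : weighted_involution V2b pV2b (fun _ => - Ci) kV2b.
Proof. unfold V2b. weighted_involution_tac. Qed.
Lemma wi_W2b : weighted_involution W2b pV2b (signs 1 1 (-1) (-1)) kV2b.
Proof. unfold W2b. weighted_involution_tac. Qed.

Lemma pV1_block l : (pV1 l / 4 = l / 4)%nat.
Proof. residue_cases l; reflexivity. Qed.
Lemma pV2_block l : (pV2 l / 4 = l / 4)%nat.
Proof. residue_cases l; reflexivity. Qed.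

Lemma kV1r_level l : (l / 4 <= kV1r l <= S (l / 4))%nat.
Proof. residue_cases l; lia. Qed.
Lemma kV1b_level l : (l / 4 <= kV1b l <= S (l / 4))%nat.
Proof. residue_cases l; lia. Qed.
Lemma kV2r_level l : (l / 4 <= kV2r l <= S (l / 4))%nat.
Proof. residue_cases l; lia. Qed.
Lemma kV2b_level l : (l / 4 <= kV2b l <= S (l / 4))%nat.
Proof. residue_cases l; lia. Qed.

Lemma kV1r_surj j : exists l, kV1r l = j.
Proof. exists (4 * j)%nat. unfold kV1r, by_residue. now rewrite mod4_0, div4_0. Qed.
Lemma kV1b_surj j : exists l, kV1b l = j.
Proof. exists (4 * j + 1)%nat. unfold kV1b, by_residue. now rewrite mod4, div4 by lia. Qed.
Lemma kV2r_surj j : exists l, kV2r l = j.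
Proof. exists (4 * j + 2)%nat. unfold kV2r, by_residue. now rewrite mod4, div4 by lia. Qed.
Lemma kV2b_surj j : exists l, kV2b l = j.
Proof. exists (4 * j)%nat. unfold kV2b, by_residue. now rewrite mod4_0, div4_0. Qed.

Theorem mainTheorem6 :
  (forall U : vec -> vec, In U (V1 :: W1 :: V2 :: W2 :: nil) ->
     (forall lam : C, eigenvalue U lam <-> (lam = Ci \/ lam = - Ci)) /\
     (forall n : nat, (1 <= n)%nat ->
        forall x, Y (4 * n) x -> Y (4 * n) (U x)))
  /\
  (forall U : vec -> vec,
     In U (V1r :: W1r :: V1b :: W1b :: V2r :: W2r :: V2b :: W2b :: nil) ->
     (forall lam : C, eigenvalue U lam <->
        exists j : nat, lam = Ci * RtoC (sqrt (INR j)) \/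
                        lam = - (Ci * RtoC (sqrt (INR j)))) /\
     (forall n : nat, (1 <= n)%nat ->
        forall x, in_span (fun v => exists lam, (Cmod lam < sqrt (INR n))%R
                                               /\ eigpair U lam v) x ->
                  Y (4 * n) x) /\
     (forall n : nat, (1 <= n)%nat ->
        forall x, in_span (fun v => exists lam, (Cmod lam > sqrt (INR n))%R
                                               /\ eigpair U lam v) x ->
                  Yperp (4 * n) x)).
Proof.
  split; intros U HU; cbn in HU.
  - destruct HU as [<- | [<- | [<- | [<- | []]]]].
    + exact (unit_weight_spectral_properties _ _ _ wi_V1 pV1_block).
    + exact (unit_weight_spectral_properties _ _ _ wi_W1 pV1_block).
    + exact (unit_weight_spectral_properties _ _ _ wi_V2 pV2_block).
    + exact (unit_weight_spectral_properties _ _ _ wi_W2 pV2_block).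
  - destruct HU as [<- | [<- | [<- | [<- | [<- | [<- | [<- | [<- | []]]]]]]]].
    + exact (hermite_level_spectral_properties _ _ _ _ wi_V1r kV1r_level kV1r_surj).
    + exact (hermite_level_spectral_properties _ _ _ _ wi_W1r kV1r_level kV1r_surj).
    + exact (hermite_level_spectral_properties _ _ _ _ wi_V1b kV1b_level kV1b_surj).
    + exact (hermite_level_spectral_properties _ _ _ _ wi_W1b kV1b_level kV1b_surj).
    + exact (hermite_level_spectral_properties _ _ _ _ wi_V2r kV2r_level kV2r_surj).
    + exact (hermite_level_spectral_properties _ _ _ _ wi_W2r kV2r_level kV2r_surj).
    + exact (hermite_level_spectral_properties _ _ _ _ wi_V2b kV2b_level kV2b_surj).
    + exact (hermite_level_spectral_properties _ _ _ _ wi_W2b kV2b_level kV2b_surj).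
Qed.
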